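(* Let $f\in\mathcal L^1_1([0,1])$ be such that $\ln(n)\cdot\widehat T_1^n(f)\to\int f\,\mathrm{d}\mu_1$ uniformly on $Y=[1/2,1]$ as $n\to\infty$. Then $\ln(n)\cdot\widehat T_1^n(f)\to\int f\,\mathrm d\mu_1$ uniformly on every compact subset of $(0,1]$.
   Context: $T_1$ is the Farey map with inverse branches $f_{1,0}(x)=\frac x{1+x}$, $f_{1,1}(x)=\frac1{1+x}$; $\mathcal P_1 f=|f_{1,0}'|\,f\circ f_{1,0}+|f_{1,1}'|\,f\circ f_{1,1}$; $\mu_1$ is the measure with density $h_1(x)=1/x$ and $\mathcal L^1_1([0,1])$ the $\mu_1$-integrable functions; $\widehat T_1(f)=\mathcal P_1(fh_1)/h_1$. *)

From Stdlib Require Import Reals Lra Rtopology RiemannInt_SF.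
Open Scope R_scope.

Definition null_set (N : R -> Prop) : Prop :=
  forall eps, 0 < eps ->
    exists a b : nat -> R,
      (forall k, a k <= b k) /\
      (forall x, N x -> exists k, a k < x < b k) /\
      (forall n, sum_f_R0 (fun k => b k - a k) n <= eps).

(* g belongs to the Riesz class L^+ on [0,1] with integral J: g is the a.e.
   limit of an a.e. increasing sequence of step functions whose integrals
   converge to J. *)
Definition upper_int (g : R -> R) (J : R) : Prop :=
  exists (phi : nat -> StepFun 0 1) (N : R -> Prop),
    null_set N /\
    (forall x, 0 <= x <= 1 -> ~ N x ->
       (forall n, phi n x <= phi (S n) x) /\
       Un_cv (fun n => phi n x) (g x)) /\
    Un_cv (fun n => RiemannInt_SF (phi n)) J.

Definition leb_int01 (g : R -> R) (I : R) : Prop :=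
  exists g1 g2 J1 J2 N,
    upper_int g1 J1 /\ upper_int g2 J2 /\ null_set N /\
    (forall x, 0 <= x <= 1 -> ~ N x -> g x = g1 x - g2 x) /\
    I = J1 - J2.

Definition h1 (x : R) : R := 1 / x.

(* inverse branches and their derivatives *)
Definition f10 (x : R) : R := x / (1 + x).
Definition f11 (x : R) : R := 1 / (1 + x).
Definition df10 (x : R) : R := 1 / (1 + x) ^ 2.
Definition df11 (x : R) : R := - (1 / (1 + x) ^ 2).

(* mu_1 has density h1 w.r.t. Lebesgue measure on [0,1]:
   f in L^1(mu_1) with integral I  iff  f*h1 Lebesgue integrable with integral I *)
Definition mu1_int (f : R -> R) (I : R) : Prop :=
  leb_int01 (fun x => f x * h1 x) I.

Definition P1 (g : R -> R) (x : R) : R :=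
  Rabs (df10 x) * g (f10 x) + Rabs (df11 x) * g (f11 x).

Definition T1hat (f : R -> R) (x : R) : R :=
  P1 (fun y => f y * h1 y) x / h1 x.

Definition unif_conv_on (S : R -> Prop) (f : R -> R) (c : R) : Prop :=
  forall eps, 0 < eps -> exists N : nat, forall n : nat, (N <= n)%nat ->
    forall x, S x -> Rabs (ln (INR n) * Nat.iter n T1hat f x - c) < eps.

From Stdlib Require Import Reals Rtopology RList Lra Lia.
Open Scope R_scope.

(* For [z] in [[a/(1+a), a)] put [x = z/(1-z)], so that [f10 x = z] and
   [f11 x = 1 - z], with both [x] and [1 - z] in [[a, 1]].  Inverting
   [T1hat g x = (g (f10 x) + x g (f11 x)) / (1 + x)] for [g = T1hat^n f]
   gives [T1hat^n f z] as a combination of [T1hat^(n+1) f x] and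
   [T1hat^n f (1-z)]; since [ln n / ln (n+1) -> 1], uniform convergence on
   [[a, 1]] thus propagates to [[a/(1+a), 1]].  Starting from [a = 1/2] this
   reaches every [[1/(k+2), 1]], and a compact subset of [(0, 1]] is
   contained in one of them. *)

Lemma T1hat_eq (g : R -> R) (x : R) : 0 < x ->
  T1hat g x = (g (f10 x) + x * g (f11 x)) / (1 + x).
Proof.
  intros Hx; unfold T1hat, P1, h1, df10, df11.
  rewrite Rabs_Ropp, Rabs_right.
  - unfold f10, f11; field; lra.
  - apply Rle_ge, Rlt_le; unfold Rdiv; rewrite Rmult_1_l.
    apply Rinv_0_lt_compat, pow_lt; lra.
Qed.

Lemma T1hat_solve_f10 (g : R -> R) (x : R) : 0 < x ->
  g (f10 x) = (1 + x) * T1hat g x - x * g (f11 x).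
Proof. intros Hx; rewrite T1hat_eq by exact Hx; field; lra. Qed.

Lemma f10_f11_at_inverse (z : R) : z < 1 ->
  f10 (z / (1 - z)) = z /\ f11 (z / (1 - z)) = 1 - z.
Proof. intros Hz; unfold f10, f11; split; field; lra. Qed.

Lemma unif_conv_on_subset (S S' : R -> Prop) (f : R -> R) (c : R) :
  (forall x, S x -> S' x) -> unif_conv_on S' f c -> unif_conv_on S f c.
Proof.
  intros HS H eps Heps; destruct (H eps Heps) as [N HN].
  exists N; intros n Hn x Hx; exact (HN n Hn x (HS x Hx)).
Qed.

Lemma ln_succ_sub_le (t : R) : 1 <= t -> 0 <= ln (t + 1) - ln t <= 1 / t.
Proof.
  intros Ht.
  assert (Hlt : ln t < ln (t + 1)) by (apply ln_increasing; lra).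
  assert (Hdiff : ln (t + 1) - ln t = ln (1 + 1 / t)).
  { replace (1 + 1 / t) with ((t + 1) * / t) by (field; lra).
    rewrite ln_mult, ln_Rinv by (try apply Rinv_0_lt_compat; lra); ring. }
  assert (Hexp : 1 + 1 / t < exp (1 / t)).
  { apply exp_ineq1; unfold Rdiv; rewrite Rmult_1_l.
    apply Rgt_not_eq, Rinv_0_lt_compat; lra. }
  assert (Hpos : 0 < 1 + 1 / t).
  { unfold Rdiv; rewrite Rmult_1_l; pose proof (Rinv_0_lt_compat t); lra. }
  apply ln_increasing in Hexp; [|exact Hpos].
  rewrite ln_exp in Hexp; lra.
Qed.

Lemma ln_succ_ratio_small (eta : R) : 0 < eta ->
  exists M : nat, forall n, (M <= n)%nat ->
    exists p, 0 <= p < eta /\ ln (INR n) = (1 - p) * ln (INR (S n)).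
Proof.
  intros Heta.
  pose proof ln_lt_2 as Hln2.
  assert (Hpos : 0 < eta * ln 2) by (apply Rmult_lt_0_compat; lra).
  destruct (archimed_cor1 _ Hpos) as [M [HM HM0]].
  exists M; intros n Hn.
  assert (Hn1 : 1 <= INR n) by (apply (le_INR 1); lia).
  assert (HnM : / INR n <= / INR M) by (apply Rinv_le_contravar; [apply lt_0_INR | apply le_INR]; lia).
  rewrite S_INR; set (L := ln (INR n + 1)).
  assert (HL : ln 2 <= L).
  { destruct (Req_dec (INR n) 1) as [E|E].
    - unfold L; rewrite E; replace (1 + 1) with 2 by ring; lra.
    - left; apply ln_increasing; lra. }
  destruct (ln_succ_sub_le _ Hn1) as [Hd0 Hd1]; fold L in Hd0, Hd1.
  exists ((L - ln (INR n)) / L); split; [split|].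
  - unfold Rdiv; apply Rmult_le_pos; [lra | left; apply Rinv_0_lt_compat; lra].
  - apply (Rmult_lt_reg_r L); [lra|].
    unfold Rdiv at 1; rewrite Rmult_assoc, Rinv_l, Rmult_1_r by lra.
    unfold Rdiv in Hd1; rewrite Rmult_1_l in Hd1.
    assert (eta * ln 2 <= eta * L) by (apply Rmult_le_compat_l; lra).
    lra.
  - field; lra.
Qed.

Lemma three_term_estimate (I A B x p d : R) :
  0 <= x <= 1 -> 0 <= p -> d <= 1 -> Rabs (A - I) < d -> Rabs (B - I) < d ->
  Rabs ((1 + x) * (1 - p) * A - x * B - I) < 3 * d + 2 * (p * (Rabs I + 1)).
Proof.
  intros Hx Hp Hd HA HB.
  replace ((1 + x) * (1 - p) * A - x * B - I)
    with ((1 + x) * (A - I) - (1 + x) * (p * A) - x * (B - I)) by ring.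
  assert (HAbs : Rabs A <= Rabs I + 1).
  { replace A with ((A - I) + I) by ring.
    pose proof (Rabs_triang (A - I) I); lra. }
  assert (T1 : Rabs ((1 + x) * (A - I)) <= 2 * d).
  { rewrite Rabs_mult, (Rabs_right (1 + x)) by lra.
    apply Rmult_le_compat; try lra; apply Rabs_pos. }
  assert (T2 : Rabs ((1 + x) * (p * A)) <= 2 * (p * (Rabs I + 1))).
  { rewrite !Rabs_mult, (Rabs_right (1 + x)), (Rabs_right p) by lra.
    apply Rmult_le_compat; try lra.
    - apply Rmult_le_pos; [lra | apply Rabs_pos].
    - apply Rmult_le_compat_l; lra. }
  assert (T3 : Rabs (x * (B - I)) < d).
  { rewrite Rabs_mult, (Rabs_right x) by lra.
    apply Rle_lt_trans with (1 * Rabs (B - I)); [|lra].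
    apply Rmult_le_compat_r; [apply Rabs_pos | lra]. }
  pose proof (Rabs_triang ((1 + x) * (A - I) - (1 + x) * (p * A)) (- (x * (B - I)))).
  pose proof (Rabs_triang ((1 + x) * (A - I)) (- ((1 + x) * (p * A)))).
  unfold Rminus in *; rewrite !Rabs_Ropp in *; lra.
Qed.

Lemma unif_conv_on_extend (f : R -> R) (I a : R) : 0 < a <= 1/2 ->
  unif_conv_on (fun x => a <= x <= 1) f I ->
  unif_conv_on (fun x => a / (1 + a) <= x <= 1) f I.
Proof.
  intros Ha H eps Heps.
  set (d := Rmin (eps / 4) 1).
  assert (Hd : 0 < d) by (apply Rmin_glb_lt; lra).
  assert (Hd4 : d <= eps / 4) by apply Rmin_l.
  assert (Hd1 : d <= 1) by apply Rmin_r.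
  destruct (H d Hd) as [N HN].
  assert (HI : 0 < Rabs I + 1) by (pose proof (Rabs_pos I); lra).
  destruct (ln_succ_ratio_small (eps / (8 * (Rabs I + 1))))
    as [M HM]; [apply Rdiv_lt_0_compat; lra|].
  exists (N + M)%nat; intros n Hn z [Hz1 Hz2].
  destruct (Rle_or_lt a z) as [Haz | Hza].
  { specialize (HN n ltac:(lia) z (conj Haz Hz2)); lra. }
  assert (Hz0 : a <= z * (1 + a)).
  { apply (Rmult_le_compat_r (1 + a)) in Hz1; [|lra].
    replace (a / (1 + a) * (1 + a)) with a in Hz1 by (field; lra); exact Hz1. }
  assert (Hzpos : 0 < z) by nra.
  set (x := z / (1 - z)).
  assert (Hx : a <= x <= 1).
  { unfold x; split.
    - apply Rmult_le_reg_r with (1 - z); [lra|].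
      unfold Rdiv; rewrite Rmult_assoc, Rinv_l, Rmult_1_r by lra; lra.
    - apply Rmult_le_reg_r with (1 - z); [lra|].
      unfold Rdiv; rewrite Rmult_assoc, Rinv_l, Rmult_1_r by lra; lra. }
  destruct (f10_f11_at_inverse z ltac:(lra)) as [E10 E11]; fold x in E10, E11.
  destruct (HM n ltac:(lia)) as [p [Hp Hln]].
  assert (HA := HN (S n) ltac:(lia) x Hx).
  assert (HB := HN n ltac:(lia) (1 - z) ltac:(lra)).
  assert (Hz : Nat.iter n T1hat f z
          = (1 + x) * Nat.iter (S n) T1hat f x - x * Nat.iter n T1hat f (1 - z)).
  { rewrite <- E10 at 1; rewrite <- E11; apply T1hat_solve_f10; lra. }
  rewrite Hz.
  replace (ln (INR n) * ((1 + x) * Nat.iter (S n) T1hat f x - x * Nat.iter n T1hat f (1 - z)))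
    with ((1 + x) * (1 - p) * (ln (INR (S n)) * Nat.iter (S n) T1hat f x)
          - x * (ln (INR n) * Nat.iter n T1hat f (1 - z))) by (rewrite Hln; ring).
  eapply Rlt_le_trans; [apply (three_term_estimate _ _ _ _ _ d); auto; lra|].
  assert (p * (Rabs I + 1) <= eps / 8).
  { destruct Hp as [_ Hp]; apply Rmult_lt_compat_r with (r := Rabs I + 1) in Hp; [|lra].
    replace (eps / (8 * (Rabs I + 1)) * (Rabs I + 1)) with (eps / 8) in Hp by (field; lra).
    lra. }
  lra.
Qed.

Lemma unif_conv_on_harmonic (f : R -> R) (I : R) :
  unif_conv_on (fun x => 1/2 <= x <= 1) f I ->
  forall k : nat, unif_conv_on (fun x => 1 / (INR k + 2) <= x <= 1) f I.
Proof.
  intros H k; induction k as [|k IHk].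
  - eapply unif_conv_on_subset; [|exact H].
    intros x Hx; simpl in Hx; replace (0 + 2) with 2 in Hx by ring; exact Hx.
  - pose proof (pos_INR k).
    assert (Ha : 0 < 1 / (INR k + 2) <= 1/2).
    { split; unfold Rdiv; rewrite !Rmult_1_l;
        [apply Rinv_0_lt_compat | apply Rinv_le_contravar]; lra. }
    eapply unif_conv_on_subset; [|exact (unif_conv_on_extend f I _ Ha IHk)].
    intros x Hx.
    replace (1 / (INR k + 2) / (1 + 1 / (INR k + 2))) with (1 / (INR (S k) + 2))
      by (rewrite S_INR; field; lra).
    exact Hx.
Qed.

Lemma compact_pos_lower_bound (K : R -> Prop) :
  compact K -> (forall x, K x -> 0 < x) ->
  exists m, 0 < m /\ forall x, K x -> m <= x.
Proof.
  intros HK Hpos.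
  set (F := mkfamily (fun y => 0 < y) (fun y x => 0 < y /\ y < x)
              (fun y '(ex_intro _ _ (conj Hy _)) => Hy)).
  assert (HF : covering_open_set K F).
  { split.
    - intros x Hx; exists (x / 2); simpl; specialize (Hpos x Hx); lra.
    - intros y x [Hy Hyx].
      exists (mkposreal (x - y) ltac:(lra)); intros w Hw.
      unfold disc in Hw; simpl in Hw; apply Rabs_def2 in Hw; simpl; lra. }
  destruct (HK F HF) as [D [Hcov [l Hl]]].
  exists (MinRlist l); split.
  - apply MinRlist_P2; intros y Hy; apply Hl in Hy; apply Hy.
  - intros x Hx; destruct (Hcov x Hx) as [y [[Hy Hyx] HDy]].
    pose proof (MinRlist_P1 l y (proj1 (Hl y) (conj Hy HDy))); lra.
Qed.

Theorem theorem4p15 (f : R -> R) (I : R) :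
  mu1_int f I ->
  unif_conv_on (fun x => 1/2 <= x <= 1) f I ->
  forall K : R -> Prop,
    compact K -> (forall x, K x -> 0 < x <= 1) ->
    unif_conv_on K f I.
Proof.
  intros _ H K HK HK1.
  destruct (compact_pos_lower_bound K HK) as [m [Hm Hlb]].
  { intros x Hx; apply HK1, Hx. }
  destruct (archimed_cor1 m Hm) as [k [Hk Hk0]].
  eapply unif_conv_on_subset; [|exact (unif_conv_on_harmonic f I H k)].
  intros x Hx; split; [|apply HK1, Hx].
  assert (1 / (INR k + 2) <= / INR k).
  { unfold Rdiv; rewrite Rmult_1_l.
    apply Rinv_le_contravar; [apply lt_0_INR; lia | lra]. }
  specialize (Hlb x Hx); lra.
Qed.
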